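(* Let $R$ be a commutative ring with unit, $\mathcal{P}$ a filtered poset, and $F\colon\mathcal{P}\to R\text{-mod}$ a weak Mackey functor with a quasi-unit. Then $F$ is cofibrant, i.e. the natural map $\operatorname{colim}_{\mathcal{P}_{<i}}F\to F(i)$ is injective for every $i\in\mathcal{P}$.
   Context: A filtered poset is a poset with a map $d\colon\mathcal{P}\to\mathbb{N}$ with $d(i)<d(j)$ whenever $i<j$. (Cofibrant refers to the Reedy model structure on $\operatorname{Fun}(\mathcal{P},\operatorname{Ch}(R))$, in which a functor is cofibrant exactly when these natural maps are injective.) $F(j<i)$ is the image of the arrow $j\to i$, $F(i<i)=1$. $\operatorname{Im}_F(j)=\sum_{k<j}\operatorname{Im}F(k<j)$. An endomorphism (automorphism) $\alpha$ of $F(i)$ is $F$-linear if for every $j<i$ there is an endomorphism (automorphism) $\beta$ of $F(j)$ with $\alpha\circ F(j<i)=F(j<i)\circ\beta$; write $\operatorname{End}^F(i)$, $\operatorname{Aut}^F(i)$. $F$ is a weak Mackey functor if for all $j<i$ there is an $R$-linear $G(j<i)\colon F(i)\to F(j)$ with $G(j<i)\circ F(j<i)=\alpha(i,j)\in\operatorname{End}^F(j)$, and for all $k<i$ with $j\not\le k$, $\operatorname{Im}(G(j<i)\circ F(k<i))\subseteq\operatorname{Im}_F(j)$; it has a quasi-unit if each $\alpha(i,j)\in\operatorname{Aut}^F(j)$. *)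

From HB Require Import structures.
From mathcomp Require Import all_boot all_order all_algebra.

Set Implicit Arguments.
Unset Strict Implicit.
Unset Printing Implicit Defensive.

Import Order.Theory GRing.Theory.

(* A functor F : P -> R-mod is given by a family of R-modules F k and
   R-linear maps Fmap j i : F j -> F i, only meaningful for j <= i
   (functoriality is required only on comparable pairs; the values on
   incomparable pairs are irrelevant junk). *)

Section PosetModules.
Variables (R : comPzRingType) (d : Order.disp_t) (P : porderType d).
Variables (F : P -> lmodType R) (Fmap : forall j i : P, {linear F j -> F i}).

Local Open Scope ring_scope.

Definition is_functor : Prop :=
  (forall i (x : F i), Fmap i i x = x) /\
  (forall k j i (x : F k), (k <= j)%O -> (j <= i)%O ->
      Fmap k i x = Fmap j i (Fmap k j x)).

Definition ImF (j : P) (y : F j) : Prop :=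
  exists s : seq {k : P & F k},
    all (fun p => (tag p < j)%O) s /\
    y = \sum_(p <- s) Fmap (tag p) j (tagged p).

Definition EndF (j : P) (a : F j -> F j) : Prop :=
  linear a /\
  forall l, (l < j)%O -> exists b : {linear F l -> F l},
      forall x : F l, a (Fmap l j x) = Fmap l j (b x).

Definition AutF (j : P) (a : F j -> F j) : Prop :=
  linear a /\ bijective a /\
  forall l, (l < j)%O -> exists b : {linear F l -> F l},
      bijective b /\ forall x : F l, a (Fmap l j x) = Fmap l j (b x).

Definition weak_mackey_quasi_unit : Prop :=
  forall j i : P, (j < i)%O ->
    exists G : {linear F i -> F j},
      AutF (fun x => G (Fmap j i x)) /\
      (forall k, (k < i)%O -> ~~ (j <= k)%O ->
         forall x : F k, ImF (G (Fmap k i x))).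

(* Colimit over P_{<i}: (direct sum of F k, k < i) modulo the submodule
   spanned by the relations  e_k(x) - e_{k'}(F(k<k') x),  k < k' < i.
   Elements of the direct sum are finitely supported dependent functions. *)
Definition relgen (i : P) (g : forall k, F k) : Prop :=
  exists k k' (x : F k),
    [/\ (k < k')%O, (k' < i)%O, g k = x, g k' = - Fmap k k' x
      & forall j, j != k -> j != k' -> g j = 0].

Inductive relspan (i : P) : (forall k, F k) -> Prop :=
  | rs_zero : relspan i (fun k => 0)
  | rs_gen : forall g, relgen i g -> relspan i g
  | rs_add : forall g h, relspan i g -> relspan i h ->
               relspan i (fun k => g k + h k)
  | rs_scale : forall (a : R) g, relspan i g -> relspan i (fun k => a *: g k).

(* The natural map colim_{P_{<i}} F -> F(i) is injective: every finitely
   supported family g with support in P_{<i} that is sent to 0 lies in the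
   relation submodule. *)
Definition colim_map_injective (i : P) : Prop :=
  forall (g : forall k, F k) (s : seq P),
    uniq s -> (forall k, k \in s -> (k < i)%O) ->
    (forall k, k \notin s -> g k = 0) ->
    \sum_(k <- s) Fmap k i (g k) = 0 ->
    relspan i g.

Definition cofibrant : Prop := forall i : P, colim_map_injective i.

End PosetModules.

From HB Require Import structures.
From mathcomp Require Import all_boot all_order all_algebra.
From Stdlib Require Import FunctionalExtensionality.

Set Implicit Arguments.
Unset Strict Implicit.
Unset Printing Implicit Defensive.

Import Order.Theory GRing.Theory.
Local Open Scope ring_scope.

(* Let g be a family in the direct sum of the F k, k < i, killed by the natural
   map to F i, and let j carry a nonzero entry of maximal degree. No other index k
   of the support satisfies j <= k, so applying G(j<i) to the relation
   sum_k F(k<i) (g k) = 0, the Mackey condition puts alpha(i,j) (g j) into Im_F(j);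
   since alpha(i,j) is an F-linear automorphism, g j itself lies in Im_F(j), say
   g j = sum_l F(l<j) y_l. Modulo the colimit relations e_l(y_l) - e_j(F(l<j) y_l)
   the entry g j can then be traded for the y_l, which sit at indices of smaller
   degree. Induction on the top degree, and within it on the indices of that
   degree, reduces g to 0. *)

Section LinearFun.
Variables (R : comPzRingType) (V : lmodType R) (a : V -> V).
Hypothesis linear_a : linear a.

Lemma linear_funD x y : a (x + y) = a x + a y.
Proof. by have := linear_a 1 x y; rewrite !scale1r. Qed.

Lemma linear_fun0 : a 0 = 0.
Proof. by apply: (addrI (a 0)); rewrite -linear_funD !addr0. Qed.

End LinearFun.

Section Colimit.
Variables (R : comPzRingType) (d : Order.disp_t) (P : porderType d).
Variables (F : P -> lmodType R) (Fmap : forall j i : P, {linear F j -> F i}).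

Definition single (j : P) (x : F j) : forall k, F k :=
  fun k => if j =P k is ReflectT e then eq_rect j F x k e else 0.

Lemma single_eq j (x : F j) : single x j = x.
Proof. by rewrite /single; case: eqP => // e; rewrite (eq_irrelevance e erefl). Qed.

Lemma single_neq j (x : F j) k : j != k -> single x k = 0.
Proof. by rewrite /single; case: eqP. Qed.

Lemma single0 j k : single (0 : F j) k = 0.
Proof. by have [<-|/single_neq//] := eqVneq j k; rewrite single_eq. Qed.

Lemma singleD j (x y : F j) k : single (x + y) k = single x k + single y k.
Proof. by have [<-|jk] := eqVneq j k; rewrite ?single_eq // !single_neq ?addr0. Qed.

Definition push (i : P) (Y : seq {k : P & F k}) : F i :=
  \sum_(p <- Y) Fmap (tag p) i (tagged p).

Definition dsum_of (Y : seq {k : P & F k}) : forall k, F k :=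
  fun k => \sum_(p <- Y) single (tagged p) k.

Definition colim_map (i : P) (s : seq P) (g : forall k, F k) : F i :=
  \sum_(k <- s) Fmap k i (g k).

Definition in_colim_kernel (i : P) (s : seq P) (g : forall k, F k) : Prop :=
  [/\ uniq s, forall k, k \in s -> (k < i)%O,
      forall k, k \notin s -> g k = 0 & colim_map i s g = 0].

Lemma in_colim_kernel_supp i s g k : in_colim_kernel i s g -> g k != 0 -> k \in s.
Proof. by move=> [_ _ gs _] gk; apply: contraT => /gs/eqP; rewrite (negbTE gk). Qed.

Lemma dsum_of_notin Y k : k \notin map tag Y -> dsum_of Y k = 0.
Proof.
move=> kY; rewrite /dsum_of big1_seq // => p /andP[_ pY].
by apply: single_neq; apply: contraNneq kY => <-; apply: map_f.
Qed.

Lemma colim_mapD i s g h :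
  colim_map i s (fun k => g k + h k) = colim_map i s g + colim_map i s h.
Proof. by rewrite /colim_map -big_split; apply: eq_bigr => k _; rewrite linearD. Qed.

Lemma colim_mapN i s g : colim_map i s (fun k => - g k) = - colim_map i s g.
Proof. by rewrite /colim_map -sumrN; apply: eq_bigr => k _; rewrite linearN. Qed.

Lemma colim_map_cat i s t g : colim_map i (s ++ t) g = colim_map i s g + colim_map i t g.
Proof. exact: big_cat. Qed.

Lemma colim_map_eq0 i s g : (forall k, k \in s -> g k = 0) -> colim_map i s g = 0.
Proof. by move=> g0; rewrite /colim_map big1_seq // => k /andP[_ /g0->]; rewrite linear0. Qed.

Lemma colim_map_single i s j (x : F j) :
  uniq s -> j \in s -> colim_map i s (single x) = Fmap j i x.
Proof.
move=> us js; rewrite /colim_map (bigD1_seq j) //= single_eq big1 ?addr0 // => k kj.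
by rewrite single_neq 1?eq_sym // linear0.
Qed.

Lemma colim_map_dsum i s Y :
  uniq s -> all (fun p => tag p \in s) Y -> colim_map i s (dsum_of Y) = push i Y.
Proof.
move=> us /allP Ys; rewrite /colim_map /push.
under eq_bigr do rewrite linear_sum.
rewrite exchange_big; apply: eq_big_seq => p /Ys ps.
exact: colim_map_single.
Qed.

Lemma push_Fmap j i Y : is_functor Fmap -> (j <= i)%O ->
  all (fun p => tag p < j)%O Y -> Fmap j i (push j Y) = push i Y.
Proof.
move=> [_ Fcomp] ji /allP Yj; rewrite linear_sum; apply: eq_big_seq => p /Yj pj.
by rewrite -Fcomp // ltW.
Qed.

Lemma relspan_ext i g h : (forall k, g k = h k) -> relspan Fmap i g -> relspan Fmap i h.
Proof. by move=> /(functional_extensionality_dep g h)->. Qed.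

Lemma relspan_single_sub i l j (x : F l) : (l < j)%O -> (j < i)%O ->
  relspan Fmap i (fun k => single x k - single (Fmap l j x) k).
Proof.
move=> lj ji; have lnej : l != j by rewrite lt_eqF.
apply: rs_gen; exists l, j, x; split => //=.
- by rewrite single_eq single_neq ?subr0 // eq_sym.
- by rewrite single_eq single_neq ?sub0r.
- by move=> k kl kj; rewrite !single_neq 1?eq_sym // subr0.
Qed.

Lemma relspan_dsum_push i j Y : (j < i)%O -> all (fun p => tag p < j)%O Y ->
  relspan Fmap i (fun k => dsum_of Y k - single (push j Y) k).
Proof.
move=> ji; elim: Y => [|[l x] Y IH] /= => [_|/andP[lj /IH HY]].
  by apply: relspan_ext (rs_zero _ _) => k; rewrite /dsum_of /push !big_nil single0 subr0.
apply: relspan_ext (rs_add (relspan_single_sub x lj ji) HY) => k.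
by rewrite /dsum_of /push !big_cons singleD opprD addrACA.
Qed.

Lemma ImF0 j : ImF Fmap (0 : F j).
Proof. by exists [::]; rewrite big_nil. Qed.

Lemma ImFD j (x y : F j) : ImF Fmap x -> ImF Fmap y -> ImF Fmap (x + y).
Proof.
move=> [s [sj ->]] [t [tj ->]].
by exists (s ++ t); rewrite all_cat sj tj big_cat.
Qed.

Lemma ImFN j (x : F j) : ImF Fmap x -> ImF Fmap (- x).
Proof.
move=> [s [sj ->]].
exists [seq Tagged F (- tagged p) | p : {k : P & F k} <- s]; rewrite all_map.
by split=> //; rewrite big_map -sumrN; apply: eq_bigr => p _; rewrite linearN.
Qed.

Lemma ImF_sum j (I : eqType) (r : seq I) (Pr : pred I) (h : I -> F j) :
  (forall q, q \in r -> Pr q -> ImF Fmap (h q)) -> ImF Fmap (\sum_(q <- r | Pr q) h q).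
Proof.
move=> Ih; rewrite big_seq_cond; apply: big_ind => [||q /andP[]]; last exact: Ih.
  exact: ImF0.
exact: ImFD.
Qed.

Lemma ImF_Fmap l j (x : F l) : (l < j)%O -> ImF Fmap (Fmap l j x).
Proof. by move=> lj; exists [:: Tagged F x]; rewrite /= lj big_seq1. Qed.

Lemma AutF_ImF_preimage j (a : F j -> F j) x :
  AutF Fmap a -> ImF Fmap x -> exists2 z, ImF Fmap z & x = a z.
Proof.
move=> [la [_ Aa]] [Y [Yj ->]]; elim: Y Yj => [_|[l y] Y IH /andP[lj /IH[z Iz E]]].
  by exists 0; [exact: ImF0 | rewrite big_nil linear_fun0].
have [b [[binv _ bK] Eb]] := Aa _ lj.
exists (Fmap l j (binv y) + z); first exact/ImFD/Iz/ImF_Fmap.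
by rewrite big_cons E linear_funD // Eb /= bK.
Qed.

Lemma ImF_AutF j (a : F j -> F j) y : AutF Fmap a -> ImF Fmap (a y) -> ImF Fmap y.
Proof.
move=> Aa /(AutF_ImF_preimage Aa)[z Iz /(bij_inj (proj1 (proj2 Aa)))->].
exact: Iz.
Qed.

Definition lower_entry (g : forall k, F k) (j : P) (Y : seq {k : P & F k}) : forall k, F k :=
  fun k => g k - single (g j) k + dsum_of Y k.

Lemma lower_entry_at g j Y : all (fun p => tag p < j)%O Y -> lower_entry g j Y j = 0.
Proof.
move=> /allP Yj; rewrite /lower_entry single_eq subrr add0r dsum_of_notin //.
by apply/mapP => -[p /Yj pj jp]; rewrite -jp ltxx in pj.
Qed.

Lemma lower_entry_other g j Y k :
  k != j -> k \notin map tag Y -> lower_entry g j Y k = g k.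
Proof.
by move=> kj kY; rewrite /lower_entry single_neq 1?eq_sym // dsum_of_notin // subr0 addr0.
Qed.

Lemma relspan_lower_entry i g j Y : (j < i)%O -> all (fun p => tag p < j)%O Y ->
  g j = push j Y -> relspan Fmap i (lower_entry g j Y) -> relspan Fmap i g.
Proof.
move=> ji Yj gj Hg'.
apply: relspan_ext (rs_add Hg' (rs_scale (-1) (relspan_dsum_push ji Yj))) => k.
by rewrite /lower_entry scaleN1r opprB -gj addrACA subrK subrr addr0.
Qed.

End Colimit.

Section Cofibrancy.
Variables (R : comPzRingType) (d : Order.disp_t) (P : porderType d).
Variables (F : P -> lmodType R) (Fmap : forall j i : P, {linear F j -> F i}).
Hypothesis HF : is_functor Fmap.

Lemma lower_entry_kernel i s g j Y : in_colim_kernel Fmap i s g -> j \in s ->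
  all (fun p => tag p < j)%O Y -> g j = push Fmap j Y ->
  exists s', in_colim_kernel Fmap i s' (lower_entry g j Y).
Proof.
move=> [us si gs g0] js Yj gj.
have ji := si j js.
have Ys k : k \in map tag Y -> (k < i)%O.
  by move=> /mapP[p /(allP Yj) pj ->]; exact: lt_trans ji.
pose t := [seq k <- undup (map tag Y) | k \notin s].
have in_st k : (k \in s ++ t) = (k \in s) || (k \in map tag Y).
  by rewrite mem_cat mem_filter mem_undup; case: (k \in s).
have ust : uniq (s ++ t).
  rewrite cat_uniq us filter_uniq ?undup_uniq // andbT /=.
  by apply/hasPn => k; rewrite mem_filter => /andP[].
exists (s ++ t); split => //.
- by move=> k; rewrite in_st => /orP[/si|/Ys].
- move=> k; rewrite in_st negb_or => /andP[ks kY].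
  by rewrite lower_entry_other ?gs //; apply: contraNneq ks => ->.
have gt0 : colim_map Fmap i t g = 0.
  by apply: colim_map_eq0 => k; rewrite mem_filter => /andP[/gs].
rewrite /lower_entry colim_mapD colim_mapD colim_mapN colim_map_cat g0 gt0 addr0.
rewrite colim_map_single ?in_st ?js // colim_map_dsum //; last first.
  by apply/allP => p pY; rewrite in_st map_f ?orbT.
by rewrite gj push_Fmap // ?add0r ?addNr // ltW.
Qed.

Hypothesis HM : weak_mackey_quasi_unit Fmap.

Lemma top_entry_ImF i s g j : in_colim_kernel Fmap i s g -> j \in s ->
  (forall k, k \in s -> k != j -> g k != 0 -> ~~ (j <= k)%O) -> ImF Fmap (g j).
Proof.
move=> [us si _ g0] js top.
have [G [AutG GIm]] := HM (si j js).
apply: (ImF_AutF AutG) => /=.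
have : G (colim_map Fmap i s g) = 0 by rewrite g0 linear0.
rewrite /colim_map (bigD1_seq j) //= linearD linear_sum => /eqP; rewrite addr_eq0 => /eqP ->.
apply/ImFN/ImF_sum => k ks kj.
have [->|gk] := eqVneq (g k) 0; first by rewrite !linear0; exact: ImF0.
exact: (GIm k (si k ks) (top k ks kj gk) (g k)).
Qed.

Variables (deg : P -> nat) (Hdeg : forall j k : P, (j < k)%O -> (deg j < deg k)%N).

Definition top_entries_in (D : nat) (t : seq P) (g : forall k, F k) : Prop :=
  forall k, g k != 0 -> (deg k < D)%N \/ deg k = D /\ k \in t.

Lemma lower_top_entry i s g D j t :
  in_colim_kernel Fmap i s g -> top_entries_in D (j :: t) g ->
  exists s' g', [/\ in_colim_kernel Fmap i s' g', top_entries_in D t g'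
                  & relspan Fmap i g' -> relspan Fmap i g].
Proof.
move=> ker gD.
have [/andP[gj /eqP dj]|not_top] := boolP ((g j != 0) && (deg j == D)); last first.
  exists s, g; split=> // k gk; case: (gD k gk) => [|[dk]]; first by left.
  rewrite in_cons => /orP[/eqP kj|]; last by right.
  by move: not_top; rewrite -kj gk dk eqxx.
have js := in_colim_kernel_supp ker gj.
have top k : k \in s -> k != j -> g k != 0 -> ~~ (j <= k)%O.
  move=> _ kj /gD gk; rewrite le_eqVlt eq_sym (negbTE kj) /=.
  apply/negP => /Hdeg; rewrite dj ltnNge.
  by case: gk => [/ltnW->|[-> _]]; rewrite ?leqnn.
have [Y [Yj gY]] := top_entry_ImF ker js top.
have [s' ker'] := lower_entry_kernel ker js Yj gY.
exists s', (lower_entry g j Y); split => //.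
- move=> k; have [/mapP[p /(allP Yj) pj ->] _|kY] := boolP (k \in map tag Y).
    by left; rewrite -dj Hdeg.
  have [->|kj] := eqVneq k j; first by rewrite lower_entry_at // eqxx.
  rewrite lower_entry_other // => /gD[|[dk]]; first by left.
  by rewrite in_cons (negbTE kj) => kt; right.
- by case: ker => _ si _ _; apply: relspan_lower_entry => //; exact: si.
Qed.

Lemma relspan_of_deg_lt i D s g : in_colim_kernel Fmap i s g ->
  (forall k, g k != 0 -> (deg k < D)%N) -> relspan Fmap i g.
Proof.
elim: D s g => [|D IHD] s g ker gD.
  by apply: relspan_ext (rs_zero _ _) => k; apply/esym/eqP; apply: contraT => /gD.
suff top_in t s' g' :
    in_colim_kernel Fmap i s' g' -> top_entries_in D t g' -> relspan Fmap i g'.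
  apply: (top_in s s g ker) => k gk; have := gD k gk; rewrite ltnS leq_eqVlt.
  case/orP => [/eqP dk|]; last by left.
  by right; split; last exact: in_colim_kernel_supp ker gk.
elim: t s' g' => [|j t IHt] s' g' ker' gD'.
  by apply: IHD ker' _ => k /gD'[|[_]].
have [s'' [g'' [ker'' gD'' Hg'']]] := lower_top_entry ker' gD'.
exact/Hg''/(IHt _ _ ker'' gD'').
Qed.

End Cofibrancy.

Theorem lemma3p4 (R : comPzRingType) (d : Order.disp_t) (P : porderType d)
  (deg : P -> nat) (Hdeg : forall i j : P, (i < j)%O -> (deg i < deg j)%N)
  (F : P -> lmodType R) (Fmap : forall j i : P, {linear F j -> F i})
  (HF : is_functor Fmap) (HM : weak_mackey_quasi_unit Fmap) :
  cofibrant Fmap.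
Proof.
move=> i g s us si gs g0.
have ker : in_colim_kernel Fmap i s g by [].
apply: (relspan_of_deg_lt HF HM Hdeg (D := (\max_(k <- s) deg k).+1) ker) => k gk.
by rewrite ltnS leq_bigmax_seq // (in_colim_kernel_supp ker gk).
Qed.
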